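(* Under the direct FIFO mechanism, when all drivers use the equilibrium strategy of Theorem 1 (accept all dispatches, join iff the queue length is at most $\bar Q$, never leave or move to the tail): if $\lambda>\sum_{i\in\mathcal L}\mu_i$, the steady-state queue length is $Q^*=\bar Q$, this is the unique steady-state length, all trips are completed, and every arriving driver has payoff $0$; if $\lambda\le\sum_{i\in\mathcal L}\mu_i$, then $Q^*=n_{j^*}$ is a steady-state queue length (unique when $\lambda\ne\sum_{j=1}^i\mu_j$ for all $i\in\mathcal L$), all trips to locations $i<j^*$ and $\lambda-\sum_{i<j^*}\mu_i$ units per unit time of trips to $j^*$ are completed, and every arriving driver has payoff $w_{j^*}$.
   Context: Model: continuous time, non-atomic, stationary; one origin with a queue. Destinations $\mathcal L=\{1,\dots,\ell\}$, rider arrival rates $\mu_i>0$, driver arrival rate $\lambda>0$, net earnings $w_1>\dots>w_\ell\ge0$ (0 for not joining or leaving without a rider), driver waiting cost $c>0$ per unit time. Queue positions $q\in[0,Q]$, $q=0$ head. Notation: $j^*=\max\{i\in\mathcal L:\lambda>\sum_{j<i}\mu_j\}$; $n_1=0$, $n_i=\sum_{j<i}(w_j-w_i)\mu_j/c$; $\bar Q=\sum_i w_i\mu_i/c$. Direct FIFO: when the queue length $Q\ge n_i$, a trip to $i$ is offered first to the driver at position $n_i$ and after each decline to the next driver further down the queue; when $Q<n_i$ it is not dispatched. A steady-state queue length is one at which the rate of drivers joining equals the rate of drivers dispatched from the queue. *)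

From Stdlib Require Import Reals Lra.
From Coquelicot Require Import Coquelicot.
Open Scope R_scope.

(* Destinations are indexed 0..l-1 (paper's 1..ell shifted by one). *)

Fixpoint psum (n : nat) (f : nat -> R) : R :=
  match n with
  | O => 0
  | S k => psum k f + f k
  end.

Definition Smu (mu : nat -> R) (i : nat) : R := psum i mu.

Definition npos (c : R) (mu w : nat -> R) (i : nat) : R :=
  psum i (fun j => (w j - w i) * mu j) / c.

Definition Qbar (l : nat) (c : R) (mu w : nat -> R) : R :=
  psum l (fun i => w i * mu i) / c.

(* Fluid steady state of the direct FIFO mechanism when every driver uses the
   Theorem-1 strategy (accept every dispatch, join iff queue length <= Qbar,
   never leave / move to tail).
   Q : queue length, r : rate at which arriving drivers join,
   x i : rate at which trips to destination i are dispatched (and completed).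
   - a trip to i is offered to position n_i; if n_i < Q it is always accepted
     by the driver there (rate mu_i); if n_i > Q it is not dispatched; if
     n_i = Q the trip is offered at the tail, i.e. to the arriving drivers;
   - arrivals join at rate lam when Q < Qbar, not at all when Q > Qbar, and at
     the boundary Q = Qbar at any rate in [0, lam];
   - a tail trip is not left unserved while arriving drivers are turned away;
   - steady state: joining rate = total dispatch rate from the queue. *)
Definition steady_state (l : nat) (lam c : R) (mu w : nat -> R)
    (Q r : R) (x : nat -> R) : Prop :=
  0 <= Q /\
  0 <= r <= lam /\
  (Q < Qbar l c mu w -> r = lam) /\
  (Qbar l c mu w < Q -> r = 0) /\
  (forall i, (i < l)%nat ->
     (npos c mu w i < Q -> x i = mu i) /\
     (Q < npos c mu w i -> x i = 0) /\
     (npos c mu w i = Q -> 0 <= x i <= mu i /\ (x i < mu i -> r = lam))) /\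
  r = psum l x.

(* forward speed of a driver at position p: rate at which drivers ahead of
   p (positions < p) are dispatched *)
Definition speed (l : nat) (c : R) (mu w x : nat -> R) (p : R) : R :=
  psum l (fun j => if Rlt_dec (npos c mu w j) p then x j else 0).

Definition travel_time (l : nat) (c : R) (mu w x : nat -> R) (a Q : R) : R :=
  RInt (fun p => / speed l c mu w x p) a Q.

(* expected payoff of a driver joining the tail of a steady-state queue of
   length Q: in the FIFO fluid, the fraction x_i / r of joiners is eventually
   dispatched to i, after travelling from Q to n_i. *)
Definition joiner_payoff (l : nat) (c : R) (mu w : nat -> R)
    (Q r : R) (x : nat -> R) : R :=
  psum l (fun i => x i / r *
            (w i - c * travel_time l c mu w x (npos c mu w i) Q)).

(* The thresholds n_i are exactly the queue positions at which a driver is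
   indifferent between a trip to i now and the trips dispatched further
   ahead: on the stretch between n_k and n_{k+1} the queue moves at speed
   mu_0 + ... + mu_k, so a driver needs (w_k - w_{k+1}) / c units of time to
   cross it, and the waiting cost accumulated from the tail Q down to n_i
   telescopes to w_i - w_m when Q = n_m (with w_l = 0 for Q = Qbar).  Hence
   every dispatched joiner earns w_m.  The steady state is pinned down by the
   flow balance: below the threshold the dispatch rate is too small to absorb
   the arrivals, above it too large. *)
From Stdlib Require Import Reals Lra Lia.
From Coquelicot Require Import Coquelicot.
Open Scope R_scope.

Lemma psum_ext n f g :
  (forall j, (j < n)%nat -> f j = g j) -> psum n f = psum n g.
Proof.
  induction n as [|n IH]; intros H; simpl; [reflexivity|].
  rewrite (H n) by lia. rewrite IH by (intros; apply H; lia). reflexivity.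
Qed.

Lemma psum_le n f g :
  (forall j, (j < n)%nat -> f j <= g j) -> psum n f <= psum n g.
Proof.
  induction n as [|n IH]; intros H; simpl; [lra|].
  assert (psum n f <= psum n g) by (apply IH; intros; apply H; lia).
  specialize (H n ltac:(lia)). lra.
Qed.

Lemma psum_le_len m n f :
  (m <= n)%nat -> (forall j, (m <= j < n)%nat -> 0 <= f j) ->
  psum m f <= psum n f.
Proof.
  induction n as [|n IH]; intros Hmn H.
  - replace m with 0%nat by lia. lra.
  - destruct (Nat.eq_dec m (S n)) as [->|Hne]; [lra|]. simpl.
    assert (psum m f <= psum n f) by (apply IH; [lia | intros; apply H; lia]).
    specialize (H n ltac:(lia)). lra.
Qed.

Lemma psum_trunc n m f :
  (m <= n)%nat -> (forall j, (m <= j < n)%nat -> f j = 0) ->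
  psum n f = psum m f.
Proof.
  induction n as [|n IH]; intros Hmn H.
  - replace m with 0%nat by lia. reflexivity.
  - destruct (Nat.eq_dec m (S n)) as [->|Hne]; [reflexivity|]. simpl.
    rewrite (H n) by lia. rewrite IH by (lia || intros; apply H; lia). ring.
Qed.

Lemma psum_pos n f :
  (0 < n)%nat -> (forall j, (j < n)%nat -> 0 < f j) -> 0 < psum n f.
Proof.
  induction n as [|n IH]; intros Hn H; [lia|]. simpl.
  specialize (H n ltac:(lia)) as Hfn.
  destruct n as [|n]; [simpl; lra|].
  assert (0 < psum (S n) f) by (apply IH; [lia | intros; apply H; lia]). lra.
Qed.

Lemma psum_mulr n f a : psum n (fun j => f j * a) = psum n f * a.
Proof. induction n as [|n IH]; simpl; [ring|]. rewrite IH. ring. Qed.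

Lemma psum_mulBl n f g t :
  psum n (fun j => (f j - t) * g j) = psum n (fun j => f j * g j) - t * psum n g.
Proof. induction n as [|n IH]; simpl; [ring|]. rewrite IH. ring. Qed.

Lemma nondecr_seq_le (a : nat -> R) m :
  (forall k, (S k <= m)%nat -> a k <= a (S k)) ->
  forall i j, (i <= j <= m)%nat -> a i <= a j.
Proof.
  intros H i j. induction j as [|j IH]; intros Hij.
  - replace i with 0%nat by lia. lra.
  - destruct (Nat.eq_dec i (S j)) as [->|Hne]; [lra|].
    specialize (IH ltac:(lia)). specialize (H j ltac:(lia)). lra.
Qed.

Lemma incr_seq_lt (a : nat -> R) m :
  (forall k, (S k <= m)%nat -> a k < a (S k)) ->
  forall i j, (i < j <= m)%nat -> a i < a j.
Proof.
  intros H i j. induction j as [|j IH]; intros Hij; [lia|].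
  specialize (H j ltac:(lia)).
  destruct (Nat.eq_dec i j) as [->|Hne]; [lra|].
  specialize (IH ltac:(lia)). lra.
Qed.

Lemma is_RInt_steps (f : R -> R) (N v D : nat -> R) (m : nat) :
  (forall k, (k < m)%nat -> N k <= N (S k)) ->
  (forall k, (k < m)%nat -> (N (S k) - N k) * v k = D k - D (S k)) ->
  (forall k p, (k < m)%nat -> N k < p < N (S k) -> f p = v k) ->
  forall i, (i <= m)%nat -> is_RInt f (N i) (N m) (D i - D m).
Proof.
  intros Hmono Hpiece Hf. induction m as [|m IH]; intros i Hi.
  - replace i with 0%nat by lia. replace (D 0%nat - D 0%nat) with 0 by ring.
    apply (@is_RInt_point R_NormedModule).
  - destruct (Nat.eq_dec i (S m)) as [->|Hne].
    { replace (D (S m) - D (S m)) with 0 by ring.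
      apply (@is_RInt_point R_NormedModule). }
    replace (D i - D (S m)) with (plus (D i - D m) (D m - D (S m)))
      by (unfold plus; simpl; ring).
    apply (@is_RInt_Chasles R_NormedModule) with (N m).
    + apply IH; try lia; intros; [apply Hmono | apply Hpiece | apply Hf]; auto; lia.
    + apply (@is_RInt_ext R_NormedModule) with (fun _ => v m).
      { intros p Hp. specialize (Hmono m ltac:(lia)).
        rewrite Rmin_left, Rmax_right in Hp by lra.
        symmetry. apply Hf; auto. }
      rewrite <- (Hpiece m) by lia.
      apply (@is_RInt_const R_NormedModule).
Qed.

Lemma npos_succ c mu W k : c <> 0 ->
  npos c mu W (S k) - npos c mu W k = (W k - W (S k)) * Smu mu (S k) / c.
Proof. intros Hc. unfold npos, Smu. rewrite !psum_mulBl. simpl. field. auto. Qed.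

Lemma joiner_payoff_const l c mu w Q r x v :
  0 < r -> r = psum l x ->
  (forall i, (i < l)%nat ->
     x i = 0 \/ w i - c * travel_time l c mu w x (npos c mu w i) Q = v) ->
  joiner_payoff l c mu w Q r x = v.
Proof.
  intros Hr Hrx H. unfold joiner_payoff.
  rewrite (psum_ext l _ (fun i => x i * (v / r))).
  - rewrite psum_mulr, <- Hrx. field. lra.
  - intros i Hi. destruct (H i Hi) as [-> | ->]; field; lra.
Qed.

Section DirectFifo.

Variables (l : nat) (c : R) (mu w : nat -> R).
Hypothesis Hc : 0 < c.
Hypothesis Hmu : forall i, (i < l)%nat -> 0 < mu i.
Hypothesis Hw : forall i j, (i < j)%nat -> (j < l)%nat -> w j < w i.
Hypothesis Hwl : 0 <= w (l - 1)%nat.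

Local Notation N := (npos c mu w).
Local Notation Qb := (Qbar l c mu w).

(* Earnings extended by w_l = 0 (not joining): then Qbar is the threshold n_l. *)
Definition wext (j : nat) : R := if (j <? l)%nat then w j else 0.

Local Notation B := (npos c mu wext).

Lemma Smu_pos k : (0 < k <= l)%nat -> 0 < Smu mu k.
Proof. intros Hk. apply psum_pos; [lia | intros; apply Hmu; lia]. Qed.

Lemma Smu_nonneg k : (k <= l)%nat -> 0 <= Smu mu k.
Proof.
  intros Hk. unfold Smu. change 0 with (psum 0 mu).
  apply psum_le_len; [lia | intros; left; apply Hmu; lia].
Qed.

Lemma npos_succ_le W k :
  (S k <= l)%nat -> W (S k) <= W k -> npos c mu W k <= npos c mu W (S k).
Proof.
  intros Hk HW. pose proof (npos_succ c mu W k ltac:(lra)).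
  assert (0 <= (W k - W (S k)) * Smu mu (S k) / c).
  { apply Rdiv_le_0_compat; [|lra].
    apply Rmult_le_pos; [lra | left; apply Smu_pos; lia]. }
  lra.
Qed.

Lemma npos_succ_lt W k :
  (S k <= l)%nat -> W (S k) < W k -> npos c mu W k < npos c mu W (S k).
Proof.
  intros Hk HW. pose proof (npos_succ c mu W k ltac:(lra)).
  assert (0 < (W k - W (S k)) * Smu mu (S k) / c).
  { apply Rdiv_lt_0_compat; [|lra].
    apply Rmult_lt_0_compat; [lra | apply Smu_pos; lia]. }
  lra.
Qed.

Lemma npos_lt i j : (i < j < l)%nat -> N i < N j.
Proof.
  intros Hij. apply (incr_seq_lt N (l - 1)); [|lia].
  intros k Hk. apply npos_succ_lt; [lia | apply Hw; lia].
Qed.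

Lemma npos_le i j : (i <= j < l)%nat -> N i <= N j.
Proof.
  intros Hij. destruct (Nat.eq_dec i j) as [->|Hne]; [lra|].
  left. apply npos_lt. lia.
Qed.

Lemma npos_lt_iff i j : (i < l)%nat -> (j < l)%nat -> N i < N j <-> (i < j)%nat.
Proof.
  intros Hi Hj. split; [|intros; apply npos_lt; lia].
  intros Hlt. destruct (Nat.lt_ge_cases i j) as [|Hji]; auto.
  pose proof (npos_le j i ltac:(lia)). lra.
Qed.

Lemma npos_inj i j : (i < l)%nat -> (j < l)%nat -> N i = N j -> i = j.
Proof.
  intros Hi Hj Heq. destruct (Nat.lt_total i j) as [h|[h|h]]; auto.
  - pose proof (npos_lt i j ltac:(lia)). lra.
  - pose proof (npos_lt j i ltac:(lia)). lra.
Qed.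

Lemma wext_succ_le k : (S k <= l)%nat -> wext (S k) <= wext k.
Proof.
  intros Hk. unfold wext.
  destruct (Nat.ltb_spec (S k) l), (Nat.ltb_spec k l); try lia.
  - left. apply Hw; lia.
  - replace k with (l - 1)%nat by lia. exact Hwl.
Qed.

Lemma npos_wext k : (k < l)%nat -> B k = N k.
Proof.
  intros Hk. unfold npos. f_equal. apply psum_ext. intros j Hj. unfold wext.
  destruct (Nat.ltb_spec j l), (Nat.ltb_spec k l); lia || reflexivity.
Qed.

Lemma Qbar_npos_wext : Qb = B l.
Proof.
  unfold Qbar, npos. f_equal. apply psum_ext. intros j Hj. unfold wext.
  destruct (Nat.ltb_spec j l), (Nat.ltb_spec l l); try lia. ring.
Qed.

Lemma npos_wext_le i j : (i <= j <= l)%nat -> B i <= B j.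
Proof.
  apply nondecr_seq_le. intros k Hk. apply npos_succ_le; auto.
  apply wext_succ_le; lia.
Qed.

Lemma Qbar_nonneg : 0 <= Qb.
Proof.
  rewrite Qbar_npos_wext.
  replace 0 with (B 0) by (unfold npos; simpl; unfold Rdiv; ring).
  apply npos_wext_le. lia.
Qed.

Lemma npos_le_Qbar i : (i < l)%nat -> N i <= Qb.
Proof.
  intros Hi. rewrite <- npos_wext, Qbar_npos_wext by auto.
  apply npos_wext_le. lia.
Qed.

Lemma npos_nonneg i : (i < l)%nat -> 0 <= N i.
Proof.
  intros Hi. replace 0 with (N 0) by (unfold npos; simpl; unfold Rdiv; ring).
  apply npos_le. lia.
Qed.

Lemma speed_between x k p :
  (k < l)%nat -> B k < p < B (S k) -> speed l c mu w x p = psum (S k) x.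
Proof.
  intros Hk [Hlo Hhi]. rewrite npos_wext in Hlo by auto. unfold speed.
  rewrite (psum_trunc l (S k)); [|lia|].
  2:{ intros j Hj. destruct (Rlt_dec (N j) p) as [h|h]; [|reflexivity].
      rewrite npos_wext in Hhi by lia.
      pose proof (npos_le (S k) j ltac:(lia)). lra. }
  apply psum_ext. intros j Hj.
  destruct (Rlt_dec (N j) p) as [h|h]; [reflexivity|].
  pose proof (npos_le j k ltac:(lia)). lra.
Qed.

(* On (B_k, B_{k+1}) the trips to 0..k are served at full rate, so the
   speed is Smu_{k+1}, and the piece costs exactly (wext_k - wext_{k+1}) / c. *)
Lemma is_RInt_inv_speed x m :
  (m <= l)%nat -> (forall k, (k < m)%nat -> x k = mu k) ->
  forall i, (i <= m)%nat ->
  is_RInt (fun p => / speed l c mu w x p) (B i) (B m) (wext i / c - wext m / c).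
Proof.
  intros Hm Hx.
  apply (is_RInt_steps _ _ (fun k => / Smu mu (S k)) (fun k => wext k / c)).
  - intros k Hk. apply npos_succ_le; [lia | apply wext_succ_le; lia].
  - intros k Hk. rewrite npos_succ by lra.
    pose proof (Smu_pos (S k) ltac:(lia)). field. split; lra.
  - intros k p Hk Hp. rewrite (speed_between x k p) by (auto; lia).
    unfold Smu. f_equal. apply psum_ext. intros j Hj. apply Hx. lia.
Qed.

Lemma travel_time_to_Qbar x i :
  (i < l)%nat -> (forall k, (k < l)%nat -> x k = mu k) ->
  travel_time l c mu w x (N i) Qb = w i / c.
Proof.
  intros Hi Hx. unfold travel_time.
  rewrite <- npos_wext, Qbar_npos_wext by auto.
  rewrite (is_RInt_unique _ _ _ _ (is_RInt_inv_speed x l ltac:(lia) Hx i ltac:(lia))).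
  unfold wext. destruct (Nat.ltb_spec i l), (Nat.ltb_spec l l); try lia.
  field. lra.
Qed.

Lemma travel_time_to_npos x i m :
  (i <= m < l)%nat -> (forall k, (k < m)%nat -> x k = mu k) ->
  travel_time l c mu w x (N i) (N m) = (w i - w m) / c.
Proof.
  intros Him Hx. unfold travel_time.
  rewrite <- (npos_wext i), <- (npos_wext m) by lia.
  rewrite (is_RInt_unique _ _ _ _ (is_RInt_inv_speed x m ltac:(lia) Hx i ltac:(lia))).
  unfold wext. destruct (Nat.ltb_spec i l), (Nat.ltb_spec m l); try lia.
  field. lra.
Qed.

Lemma ss_flow_bounds lam Q r x :
  steady_state l lam c mu w Q r x -> forall i, (i < l)%nat -> 0 <= x i <= mu i.
Proof.
  intros (_ & _ & _ & _ & Hx & _) i Hi. destruct (Hx i Hi) as (Hbelow & Habove & Hat).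
  specialize (Hmu i Hi).
  destruct (Rtotal_order (N i) Q) as [h|[h|h]].
  - rewrite Hbelow; lra.
  - apply Hat in h. lra.
  - rewrite Habove; lra.
Qed.

Lemma ss_rate_lower lam Q r x m :
  steady_state l lam c mu w Q r x -> (m <= l)%nat ->
  (forall k, (k < m)%nat -> N k < Q) -> Smu mu m <= r.
Proof.
  intros HS Hm HQ. pose proof (ss_flow_bounds _ _ _ _ HS) as Hb.
  destruct HS as (_ & _ & _ & _ & Hx & ->).
  apply Rle_trans with (psum m x).
  - right. unfold Smu. apply psum_ext. intros k Hk.
    symmetry. apply (Hx k ltac:(lia)). auto.
  - apply psum_le_len; auto. intros j Hj. apply Hb. lia.
Qed.

Lemma ss_rate_upper lam Q r x m :
  steady_state l lam c mu w Q r x -> (m <= l)%nat ->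
  (forall k, (m <= k < l)%nat -> Q < N k) -> r <= Smu mu m.
Proof.
  intros HS Hm HQ. pose proof (ss_flow_bounds _ _ _ _ HS) as Hb.
  destruct HS as (_ & _ & _ & _ & Hx & ->).
  rewrite (psum_trunc l m) by (auto; intros j Hj; apply (Hx j ltac:(lia)); auto).
  apply psum_le. intros j Hj. apply Hb. lia.
Qed.

Lemma steady_state_Qbar lam :
  Smu mu l <= lam -> steady_state l lam c mu w Qb (Smu mu l) mu.
Proof.
  intros Hlam. pose proof (Smu_nonneg l ltac:(lia)).
  split; [apply Qbar_nonneg|]. split; [lra|].
  split; [intros; lra|]. split; [intros; lra|]. split; [|reflexivity].
  intros i Hi. pose proof (npos_le_Qbar i Hi). pose proof (Hmu i Hi).
  repeat split; intros; lra.
Qed.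

Lemma ss_Qbar_unique lam Q r x :
  (0 < l)%nat -> Smu mu l < lam -> steady_state l lam c mu w Q r x -> Q = Qb.
Proof.
  intros Hl Hlam HS.
  pose proof (ss_rate_upper _ _ _ _ l HS ltac:(lia) ltac:(intros; lia)).
  pose proof (Smu_pos l ltac:(lia)).
  pose proof HS as (_ & _ & Hshort & Hlong & _).
  destruct (Rtotal_order Q Qb) as [h|[h|h]]; auto; exfalso.
  - specialize (Hshort h). lra.
  - specialize (Hlong h).
    assert (Smu mu l <= r).
    { apply (ss_rate_lower _ _ _ _ l HS); auto.
      intros k Hk. pose proof (npos_le_Qbar k Hk). lra. }
    lra.
Qed.

Lemma ss_Qbar_full_flow lam r x :
  Smu mu l < lam -> steady_state l lam c mu w Qb r x ->
  forall i, (i < l)%nat -> x i = mu i.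
Proof.
  intros Hlam HS i Hi.
  pose proof (ss_rate_upper _ _ _ _ l HS ltac:(lia) ltac:(intros; lia)).
  pose proof (ss_flow_bounds _ _ _ _ HS i Hi) as [_ Hxi].
  destruct HS as (_ & _ & _ & _ & Hx & _). destruct (Hx i Hi) as (Hbelow & _ & Hat).
  destruct (Rle_lt_or_eq_dec _ _ (npos_le_Qbar i Hi)) as [h|h]; auto.
  destruct (Rle_lt_or_eq_dec _ _ Hxi) as [h'|h']; auto.
  apply (Hat h) in h'. lra.
Qed.

Lemma joiner_payoff_Qbar lam r x :
  0 < r -> Smu mu l < lam -> steady_state l lam c mu w Qb r x ->
  joiner_payoff l c mu w Qb r x = 0.
Proof.
  intros Hr Hlam HS. pose proof (ss_Qbar_full_flow _ _ _ Hlam HS) as Hfull.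
  apply joiner_payoff_const; auto; [apply HS|].
  intros i Hi. right. rewrite travel_time_to_Qbar by auto. field. lra.
Qed.

Section Threshold.

Variables (lam : R) (js : nat).
Hypothesis Hjs : (js < l)%nat.
Hypothesis Hlo : Smu mu js < lam.
Hypothesis Hhi : lam <= Smu mu (S js).

Definition partial_flow (j : nat) : R :=
  if (j <? js)%nat then mu j else if (j =? js)%nat then lam - Smu mu js else 0.

Lemma steady_state_partial_flow : steady_state l lam c mu w (N js) lam partial_flow.
Proof.
  assert (Hstep : Smu mu (S js) = Smu mu js + mu js) by reflexivity.
  split; [apply npos_nonneg; auto|]. split; [pose proof (Smu_nonneg js ltac:(lia)); lra|].
  split; [reflexivity|]. split; [pose proof (npos_le_Qbar js Hjs); lra|].
  split.
  - intros i Hi. unfold partial_flow. split; [|split].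
    + intros h. apply npos_lt_iff in h; auto.
      destruct (Nat.ltb_spec i js); lia || reflexivity.
    + intros h. apply npos_lt_iff in h; auto.
      destruct (Nat.ltb_spec i js), (Nat.eqb_spec i js); lia || reflexivity.
    + intros h. apply npos_inj in h; auto. subst i.
      destruct (Nat.ltb_spec js js), (Nat.eqb_spec js js); try lia. lra.
  - rewrite (psum_trunc l (S js)) by
      (lia || intros j Hj; unfold partial_flow;
       destruct (Nat.ltb_spec j js), (Nat.eqb_spec j js); lia || reflexivity).
    simpl. unfold partial_flow at 2.
    destruct (Nat.ltb_spec js js), (Nat.eqb_spec js js); try lia.
    rewrite (psum_ext js _ mu) by
      (intros j Hj; unfold partial_flow; destruct (Nat.ltb_spec j js); lia || reflexivity).
    unfold Smu. ring.
Qed.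

Lemma ss_threshold_flow r x :
  steady_state l lam c mu w (N js) r x ->
  r = lam /\ (forall i, (i < js)%nat -> x i = mu i) /\
  (forall i, (js < i < l)%nat -> x i = 0) /\ x js = lam - Smu mu js.
Proof.
  intros HS. pose proof (ss_flow_bounds _ _ _ _ HS js Hjs) as Hbjs.
  destruct HS as (_ & Hr & _ & _ & Hx & Hrx).
  assert (Hbelow : forall i, (i < js)%nat -> x i = mu i)
    by (intros i Hi; apply (Hx i ltac:(lia)); apply npos_lt; lia).
  assert (Habove : forall i, (js < i < l)%nat -> x i = 0)
    by (intros i Hi; apply (Hx i ltac:(lia)); apply npos_lt; lia).
  assert (Hsum : r = Smu mu js + x js).
  { rewrite Hrx, (psum_trunc l (S js)) by (lia || intros; apply Habove; lia).
    simpl. unfold Smu. rewrite (psum_ext js x mu); auto. }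
  (* Either x_js < mu_js, and the trip offered at the tail forces r = lam,
     or all of mu_js is served and r = Smu (S js) >= lam. *)
  assert (Hrl : r = lam).
  { destruct (Hx js Hjs) as (_ & _ & Hat).
    destruct (Rle_lt_or_eq_dec _ _ (proj2 Hbjs)) as [h|h].
    - exact (proj2 (Hat eq_refl) h).
    - change (Smu mu (S js)) with (Smu mu js + mu js) in Hhi. lra. }
  repeat split; auto; lra.
Qed.

Lemma joiner_payoff_threshold r x :
  0 < r -> steady_state l lam c mu w (N js) r x ->
  joiner_payoff l c mu w (N js) r x = w js.
Proof.
  intros Hr HS. destruct (ss_threshold_flow r x HS) as (_ & Hbelow & Habove & _).
  apply joiner_payoff_const; auto; [apply HS|].
  intros i Hi. destruct (Nat.le_gt_cases i js) as [h|h].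
  - right. rewrite travel_time_to_npos by auto. field. lra.
  - left. apply Habove. lia.
Qed.

Lemma ss_threshold_unique Q r x :
  lam < Smu mu (S js) -> steady_state l lam c mu w Q r x -> Q = N js.
Proof.
  intros Hstrict HS. pose proof HS as (_ & (_ & Hr) & Hshort & _).
  destruct (Rtotal_order Q (N js)) as [h|[h|h]]; auto; exfalso.
  - pose proof (npos_le_Qbar js Hjs).
    assert (r = lam) by (apply Hshort; lra).
    assert (r <= Smu mu js).
    { apply (ss_rate_upper _ _ _ _ js HS); [lia|].
      intros k Hk. pose proof (npos_le js k ltac:(lia)). lra. }
    lra.
  - assert (Smu mu (S js) <= r).
    { apply (ss_rate_lower _ _ _ _ (S js) HS); [lia|].
      intros k Hk. pose proof (npos_le k js ltac:(lia)). lra. }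
    lra.
Qed.

End Threshold.

End DirectFifo.

Theorem mainTheorem6 (l : nat) (lam c : R) (mu w : nat -> R) (js : nat) :
  (0 < l)%nat -> 0 < lam -> 0 < c ->
  (forall i, (i < l)%nat -> 0 < mu i) ->
  (forall i j, (i < j)%nat -> (j < l)%nat -> w j < w i) ->
  0 <= w (l - 1)%nat ->
  (* js = j* = max { i : lam > sum_{j<i} mu_j } (0-based) *)
  (js < l)%nat -> Smu mu js < lam ->
  (forall i, (i < l)%nat -> Smu mu i < lam -> (i <= js)%nat) ->
  (* case lam > sum of all mu *)
  (Smu mu l < lam ->
     (exists r x, steady_state l lam c mu w (Qbar l c mu w) r x) /\
     (forall Q r x, steady_state l lam c mu w Q r x ->
        Q = Qbar l c mu w /\
        (forall i, (i < l)%nat -> x i = mu i) /\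
        (0 < r -> joiner_payoff l c mu w Q r x = 0))) /\
  (* case lam <= sum of all mu *)
  (lam <= Smu mu l ->
     (exists r x, steady_state l lam c mu w (npos c mu w js) r x) /\
     (forall r x, steady_state l lam c mu w (npos c mu w js) r x ->
        (forall i, (i < js)%nat -> x i = mu i) /\
        x js = lam - Smu mu js /\
        (0 < r -> joiner_payoff l c mu w (npos c mu w js) r x = w js) /\
        (r < lam -> w js = 0)) /\
     ((forall i, (1 <= i <= l)%nat -> lam <> Smu mu i) ->
        forall Q r x, steady_state l lam c mu w Q r x -> Q = npos c mu w js)).
Proof.
  intros Hl Hlam Hc Hmu Hw Hwl Hjs Hlo Hmax. split.
  - intros Hbig. split.
    + exists (Smu mu l), mu. apply steady_state_Qbar; auto. lra.
    + intros Q r x HS.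
      assert (HQ : Q = Qbar l c mu w) by (eapply ss_Qbar_unique; eauto). subst Q.
      split; [reflexivity|]. split.
      * eapply ss_Qbar_full_flow; eauto.
      * intros Hr. eapply joiner_payoff_Qbar; eauto.
  - intros Hsmall.
    assert (Hhi : lam <= Smu mu (S js)).
    { destruct (Nat.eq_dec (S js) l) as [->|Hne]; auto.
      destruct (Rle_or_lt lam (Smu mu (S js))) as [|h]; auto.
      apply Hmax in h; lia. }
    split; [|split].
    + exists lam, (partial_flow mu lam js). apply steady_state_partial_flow; auto.
    + intros r x HS.
      destruct (ss_threshold_flow l c mu w Hc Hmu Hw lam js Hjs Hhi r x HS)
        as (Hr & Hbelow & _ & Hat).
      split; [|split; [|split]]; auto; [|lra].
      intros. eapply joiner_payoff_threshold; eauto.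
    + intros Hne Q r x HS. eapply ss_threshold_unique; eauto.
      pose proof (Hne (S js) ltac:(lia)). lra.
Qed.
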